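(* Let $U\in\mathbb R^{d\times(d-k)}$, $V\in\mathbb R^{d\times k}$ have orthonormal columns with $UU^*+VV^*=I$, and let $\hat U\in\mathbb R^{d\times(d-k)}$, $\hat V\in\mathbb R^{d\times k}$ have orthonormal columns with $\hat U\hat U^*+\hat V\hat V^*=I$. Let $S\in\mathbb R^{d\times k}$ be such that $V^*S$ and $\hat V^*S$ are invertible. If $\|U^*\hat V\|\le1/2$ and $\|\hat U^*S(\hat V^*S)^{-1}\|\le\gamma\le1$, then $$\|U^*S(V^*S)^{-1}\|\le\frac{2+4\gamma}{3-2\gamma}.$$
   Context: $\|\cdot\|$ is the spectral norm. *)

From HB Require Import structures.
From mathcomp Require Import all_boot all_order all_algebra.
From mathcomp Require Import all_classical all_reals.
Set Implicit Arguments. Unset Strict Implicit. Unset Printing Implicit Defensive.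
Import Order.TTheory GRing.Theory Num.Theory.
Local Open Scope ring_scope.
Local Open Scope classical_set_scope.

Definition vnorm2 (R : realType) (n : nat) (x : 'cV[R]_n) : R :=
  Num.sqrt (\sum_(i < n) (x i 0) ^+ 2).

Definition specnorm (R : realType) (m n : nat) (A : 'M[R]_(m, n)) : R :=
  sup [set vnorm2 (A *m x) | x in [set x : 'cV[R]_n | vnorm2 x <= 1]].

From HB Require Import structures.
From mathcomp Require Import all_boot all_order all_algebra.
From mathcomp Require Import all_classical all_reals.
From mathcomp Require Import ring lra.
Import Order.TTheory GRing.Theory Num.Theory.
Local Open Scope ring_scope.

(* Fix a unit vector x and put w := S (V^T S)^-1 x, so that V^T w = x and the
   vector to bound is U^T w.  Write p := Vh^T w and q := Uh^T w.  Then
     q = Uh^T S (Vh^T S)^-1 p,                     so |q| <= gamma |p|;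
     p = Vh^T V x + Vh^T U (U^T w)   (as V V^T + U U^T = 1),
                                                    so |p| <= |x| + |U^T w|/2;
     U^T w = U^T Vh p + U^T Uh q     (as Vh Vh^T + Uh Uh^T = 1),
                                       so |U^T w| <= (1/2 + gamma) |p|.
   Eliminating |p| gives |U^T w| <= (2 + 4 gamma)/(3 - 2 gamma) |x|.
   Only V and Uh need orthonormal columns. *)

Set Implicit Arguments. Unset Strict Implicit. Unset Printing Implicit Defensive.

Section EuclideanNorm.
Variable R : realType.

Definition sqnorm n (v : 'cV[R]_n) : R := \sum_i v i 0 ^+ 2.
Definition dot n (a b : 'cV[R]_n) : R := \sum_i a i 0 * b i 0.

Lemma sqnorm_ge0 n (v : 'cV[R]_n) : 0 <= sqnorm v.
Proof. by apply: sumr_ge0 => i _; exact: sqr_ge0. Qed.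

Lemma vnorm2_ge0 n (v : 'cV[R]_n) : 0 <= vnorm2 v.
Proof. exact: sqrtr_ge0. Qed.

Lemma vnorm2_sq n (v : 'cV[R]_n) : vnorm2 v ^+ 2 = sqnorm v.
Proof. by rewrite /vnorm2 sqr_sqrtr // sqnorm_ge0. Qed.

Lemma dotE n (a b : 'cV[R]_n) : dot a b = (a^T *m b) 0 0.
Proof. by rewrite /dot !mxE; apply: eq_bigr => i _; rewrite mxE. Qed.

Lemma sqnormE n (v : 'cV[R]_n) : sqnorm v = dot v v.
Proof. by apply: eq_bigr => i _; rewrite expr2. Qed.

Lemma dot_trmx m n (A : 'M[R]_(m, n)) a b : dot (A *m a) b = dot a (A^T *m b).
Proof. by rewrite !dotE trmx_mul mulmxA. Qed.

Lemma sqnorm_eq0 n (v : 'cV[R]_n) i : sqnorm v = 0 -> v i 0 = 0.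
Proof.
move=> v0; apply/eqP; rewrite -sqrf_eq0; apply/eqP.
by apply: (psumr_eq0P _ v0) => // j _; exact: sqr_ge0.
Qed.

(* Cauchy-Schwarz, from the nonnegativity of |N a - D b|^2 with N = |b|^2
   and D = <a, b>. *)
Lemma cauchy_schwarz n (a b : 'cV[R]_n) : dot a b ^+ 2 <= sqnorm a * sqnorm b.
Proof.
have [b0|b_neq0] := eqVneq (sqnorm b) 0.
  rewrite /dot big1 ?expr0n ?b0 ?mulr0 // => i _.
  by rewrite (sqnorm_eq0 i b0) mulr0.
have expand (c1 c2 : R) : \sum_i (a i 0 * c1 - c2 * b i 0) ^+ 2
    = c1 ^+ 2 * sqnorm a - 2 * c1 * c2 * dot a b + c2 ^+ 2 * sqnorm b.
  rewrite /sqnorm /dot !mulr_sumr -sumrB -big_split /=.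
  by apply: eq_bigr => i _; ring.
have Npos : 0 < sqnorm b by rewrite lt_def b_neq0 sqnorm_ge0.
set N := sqnorm b; set D := dot a b.
have : 0 <= \sum_i (a i 0 * N - D * b i 0) ^+ 2.
  by apply: sumr_ge0 => i _; exact: sqr_ge0.
rewrite expand => sq_ge0.
have : 0 <= N * (N * sqnorm a - D ^+ 2).
  suff -> : N * (N * sqnorm a - D ^+ 2)
            = N ^+ 2 * sqnorm a - 2 * N * D * D + D ^+ 2 * N by [].
  by ring.
by rewrite pmulr_rge0 // subr_ge0 mulrC.
Qed.

Lemma sqrt_le_sq (x y : R) : 0 <= y -> x <= y ^+ 2 -> Num.sqrt x <= y.
Proof. by move=> y0 h; rewrite -(ger0_norm y0) -sqrtr_sqr; exact: ler_wsqrtr. Qed.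

Lemma dot_le n (a b : 'cV[R]_n) : dot a b <= vnorm2 a * vnorm2 b.
Proof.
apply: le_trans (ler_norm _) _.
by rewrite -sqrtr_sqr /vnorm2 -sqrtrM ?sqnorm_ge0 //; apply/ler_wsqrtr/cauchy_schwarz.
Qed.

Lemma vnorm2D n (a b : 'cV[R]_n) : vnorm2 (a + b) <= vnorm2 a + vnorm2 b.
Proof.
have sqnormD : sqnorm (a + b) = sqnorm a + 2 * dot a b + sqnorm b.
  rewrite /sqnorm /dot mulr_sumr -!big_split /=.
  by apply: eq_bigr => i _; rewrite mxE; ring.
apply: sqrt_le_sq; first by rewrite addr_ge0 ?vnorm2_ge0.
rewrite -/(sqnorm _) sqnormD sqrrD !vnorm2_sq.
by have := dot_le a b; lra.
Qed.

Lemma vnorm2Z n (c : R) (v : 'cV[R]_n) : vnorm2 (c *: v) = `|c| * vnorm2 v.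
Proof.
have sqnormZ : sqnorm (c *: v) = c ^+ 2 * sqnorm v.
  by rewrite /sqnorm mulr_sumr; apply: eq_bigr => i _; rewrite mxE exprMn.
by rewrite /vnorm2 -/(sqnorm _) sqnormZ sqrtrM ?sqr_ge0 // sqrtr_sqr.
Qed.

Lemma vnorm2_eq0 n (v : 'cV[R]_n) : vnorm2 v = 0 -> v = 0.
Proof.
move=> h; have v0 : sqnorm v = 0 by rewrite -vnorm2_sq h expr0n.
by apply/matrixP => i j; rewrite (ord1 j) mxE sqnorm_eq0.
Qed.

Lemma vnorm2_0 n : vnorm2 (0 : 'cV[R]_n) = 0.
Proof. by rewrite /vnorm2 big1 ?sqrtr0 // => i _; rewrite mxE expr0n. Qed.

Lemma vnorm2_isometry m n (Q : 'M[R]_(m, n)) v :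
  Q^T *m Q = 1%:M -> vnorm2 (Q *m v) = vnorm2 v.
Proof.
move=> QtQ; rewrite /vnorm2 -!/(sqnorm _) !sqnormE !dotE trmx_mul.
by rewrite -(mulmxA v^T) (mulmxA Q^T) QtQ mul1mx.
Qed.

(* If A A^T + B B^T = 1 then |A^T z|^2 + |B^T z|^2 = |z|^2, hence A^T is a
   contraction. *)
Lemma vnorm2_coisometry m n1 n2 (A : 'M[R]_(m, n1)) (B : 'M[R]_(m, n2)) z :
  A *m A^T + B *m B^T = 1%:M -> vnorm2 (A^T *m z) <= vnorm2 z.
Proof.
move=> AB1.
have sqnorm_tr p (M : 'M[R]_(m, p)) : sqnorm (M^T *m z) = (z^T *m (M *m M^T) *m z) 0 0.
  by rewrite sqnormE dotE trmx_mul trmxK !mulmxA.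
have pythagoras : sqnorm (A^T *m z) + sqnorm (B^T *m z) = sqnorm z.
  have addE (P Q : 'M[R]_1) : P 0 0 + Q 0 0 = (P + Q) 0 0 by rewrite mxE.
  by rewrite !sqnorm_tr addE -mulmxDl -mulmxDr AB1 mulmx1 sqnormE dotE.
apply: (@ler_wsqrtr _ (sqnorm (A^T *m z)) (sqnorm z)).
by rewrite -pythagoras lerDl sqnorm_ge0.
Qed.

End EuclideanNorm.

Section SpectralNorm.
Variable R : realType.
Local Open Scope classical_set_scope.

Definition specnorm_set m n (A : 'M[R]_(m, n)) : set R :=
  [set vnorm2 (A *m x) | x in [set x : 'cV[R]_n | vnorm2 x <= 1]].

Lemma specnorm_set0 m n (A : 'M[R]_(m, n)) : specnorm_set A 0.
Proof. by exists 0; rewrite /= ?mulmx0 vnorm2_0. Qed.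

(* Row-wise Cauchy-Schwarz bounds the set by the Frobenius norm. *)
Lemma specnorm_set_ub m n (A : 'M[R]_(m, n)) : has_ubound (specnorm_set A).
Proof.
exists (Num.sqrt (\sum_i sqnorm (row i A)^T)) => _ [x x_le1 <-].
apply: ler_wsqrtr; apply: ler_sum => i _.
have sqx_le1 : sqnorm x <= 1.
  by rewrite -vnorm2_sq -(expr1n R 2) lerXn2r ?nnegrE ?vnorm2_ge0.
have -> : (A *m x) i 0 = dot (row i A)^T x.
  by rewrite /dot mxE; apply: eq_bigr => j _; rewrite !mxE.
apply: le_trans (cauchy_schwarz _ _) _.
by rewrite -[X in _ <= X]mulr1 ler_wpM2l ?sqnorm_ge0.
Qed.

Lemma specnorm_has_sup m n (A : 'M[R]_(m, n)) : has_sup (specnorm_set A).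
Proof. by split; [exists 0; exact: specnorm_set0 | exact: specnorm_set_ub]. Qed.

Lemma specnorm_ge0 m n (A : 'M[R]_(m, n)) : 0 <= specnorm A.
Proof. exact: (sup_upper_bound (specnorm_has_sup A) (specnorm_set0 A)). Qed.

Lemma specnorm_bound m n (A : 'M[R]_(m, n)) s v :
  specnorm A <= s -> vnorm2 (A *m v) <= s * vnorm2 v.
Proof.
move=> As.
have [/vnorm2_eq0 ->|v_neq0] := eqVneq (vnorm2 v) 0.
  by rewrite mulmx0 !vnorm2_0 mulr0.
have vpos : 0 < vnorm2 v by rewrite lt_def v_neq0 vnorm2_ge0.
have normalised : specnorm_set A (vnorm2 (A *m ((vnorm2 v)^-1 *: v))).
  exists ((vnorm2 v)^-1 *: v) => //=.
  by rewrite vnorm2Z ger0_norm ?invr_ge0 ?vnorm2_ge0 // mulVf.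
have := le_trans (sup_upper_bound (specnorm_has_sup A) normalised) As.
by rewrite -scalemxAr vnorm2Z ger0_norm ?invr_ge0 ?vnorm2_ge0 // mulrC ler_pdivrMr.
Qed.

Lemma specnorm_le m n (A : 'M[R]_(m, n)) c :
  0 <= c -> (forall v, vnorm2 (A *m v) <= c * vnorm2 v) -> specnorm A <= c.
Proof.
move=> c0 Ac; apply: ge_sup; first by exists 0; exact: specnorm_set0.
move=> _ [x x_le1 <-]; apply: le_trans (Ac x) _.
by rewrite -[X in _ <= X]mulr1 ler_wpM2l.
Qed.

(* Transposition does not increase the spectral norm:
   |A^T y|^2 = <y, A A^T y> <= |y| |A| |A^T y|. *)
Lemma specnorm_trmx_le m n (A : 'M[R]_(m, n)) : specnorm A^T <= specnorm A.
Proof.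
apply: specnorm_le (specnorm_ge0 A) _ => y; set z := A^T *m y.
have z_ge0 := vnorm2_ge0 z.
have : vnorm2 z * vnorm2 z <= (specnorm A * vnorm2 y) * vnorm2 z.
  rewrite -expr2 vnorm2_sq sqnormE {1}/z dot_trmx trmxK.
  apply: le_trans (dot_le _ _) _; rewrite mulrAC mulrC.
  by apply: ler_wpM2r; [exact: vnorm2_ge0 | exact: specnorm_bound].
have [->|z_neq0] := eqVneq (vnorm2 z) 0.
  by rewrite mulr_ge0 ?specnorm_ge0 ?vnorm2_ge0.
by rewrite ler_pM2r // lt_def z_neq0.
Qed.

End SpectralNorm.

Lemma eliminate_intermediate (R : realFieldType) (gamma x p t : R) :
  0 <= gamma -> 2 * gamma < 3 ->
  p <= x + 2^-1 * t -> t <= (2^-1 + gamma) * p ->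
  t <= (2 + 4 * gamma) / (3 - 2 * gamma) * x.
Proof.
move=> g0 g_lt p_le t_le.
have : t <= (2^-1 + gamma) * (x + 2^-1 * t).
  by apply: le_trans t_le _; rewrite ler_wpM2l //; lra.
rewrite mulrAC ler_pdivlMr; last by lra.
by move=> t_le'; nra.
Qed.

Section KeyEstimate.
Variables (R : realType) (d m1 n1 m2 n2 : nat).
Variables (U : 'M[R]_(d, m1)) (V : 'M[R]_(d, n1)).
Variables (Uh : 'M[R]_(d, m2)) (Vh : 'M[R]_(d, n2)).

Lemma mul_resolution p q r (A : 'M[R]_(d, p)) (B : 'M[R]_(d, q))
    (M : 'M[R]_(r, d)) (w : 'cV[R]_d) :
  A *m A^T + B *m B^T = 1%:M ->
  M *m w = M *m A *m (A^T *m w) + M *m B *m (B^T *m w).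
Proof.
move=> AB1; rewrite -!mulmxA -mulmxDr; congr (_ *m _).
by rewrite !mulmxA -mulmxDl AB1 mul1mx.
Qed.

Hypotheses (VtV : V^T *m V = 1%:M) (UV1 : U *m U^T + V *m V^T = 1%:M).
Hypotheses (UhtUh : Uh^T *m Uh = 1%:M) (UVh1 : Uh *m Uh^T + Vh *m Vh^T = 1%:M).
Hypothesis UtVh_le : specnorm (U^T *m Vh) <= 2^-1.

Lemma component_bound (gamma : R) (w : 'cV[R]_d) :
  0 <= gamma -> 2 * gamma < 3 ->
  vnorm2 (Uh^T *m w) <= gamma * vnorm2 (Vh^T *m w) ->
  vnorm2 (U^T *m w) <= (2 + 4 * gamma) / (3 - 2 * gamma) * vnorm2 (V^T *m w).
Proof.
move=> g0 g_lt q_le.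
have VhtU_le : specnorm (Vh^T *m U) <= 2^-1.
  by rewrite -[U]trmxK -trmx_mul; apply: le_trans (specnorm_trmx_le _) UtVh_le.
have p_le : vnorm2 (Vh^T *m w) <= vnorm2 (V^T *m w) + 2^-1 * vnorm2 (U^T *m w).
  rewrite (mul_resolution _ _ UV1) addrC; apply: le_trans (vnorm2D _ _) _.
  apply: lerD; last exact: specnorm_bound.
  have VUh1 : Vh *m Vh^T + Uh *m Uh^T = 1%:M by rewrite addrC.
  rewrite -mulmxA; apply: le_trans (vnorm2_coisometry _ VUh1) _.
  by rewrite vnorm2_isometry.
have t_le : vnorm2 (U^T *m w) <= (2^-1 + gamma) * vnorm2 (Vh^T *m w).
  rewrite (mul_resolution _ _ UVh1) addrC mulrDl; apply: le_trans (vnorm2D _ _) _.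
  apply: lerD; first exact: specnorm_bound.
  rewrite -mulmxA; apply: le_trans (vnorm2_coisometry _ UV1) _.
  by rewrite vnorm2_isometry.
exact: eliminate_intermediate p_le t_le.
Qed.

End KeyEstimate.

Unset Implicit Arguments. Set Strict Implicit.

Theorem propositionE3 (R : realType) (d k : nat) (hkd : (k <= d)%N)
  (U Uh : 'M[R]_(d, d - k)) (V Vh S : 'M[R]_(d, k)) (gamma : R) :
  U^T *m U = 1%:M -> V^T *m V = 1%:M -> U *m U^T + V *m V^T = 1%:M ->
  Uh^T *m Uh = 1%:M -> Vh^T *m Vh = 1%:M -> Uh *m Uh^T + Vh *m Vh^T = 1%:M ->
  V^T *m S \in unitmx -> Vh^T *m S \in unitmx ->
  specnorm (U^T *m Vh) <= 2^-1 ->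
  specnorm (Uh^T *m S *m invmx (Vh^T *m S)) <= gamma -> gamma <= 1 ->
  specnorm (U^T *m S *m invmx (V^T *m S)) <= (2 + 4 * gamma) / (3 - 2 * gamma).
Proof.
move=> _ VtV UV1 UhtUh _ UVh1 VtS_unit VhtS_unit UtVh_le Y_le g_le1.
have g0 : 0 <= gamma := le_trans (specnorm_ge0 _) Y_le.
apply: specnorm_le; first by rewrite divr_ge0 //; lra.
move=> x; pose w := S *m (invmx (V^T *m S) *m x).
have Vtw : V^T *m w = x by rewrite /w !mulmxA mulmxV // mul1mx.
have -> : U^T *m S *m invmx (V^T *m S) *m x = U^T *m w by rewrite /w !mulmxA.
rewrite -Vtw; apply: (component_bound VtV UV1 UhtUh UVh1 UtVh_le) => //; first lra.
have -> : Uh^T *m w = Uh^T *m S *m invmx (Vh^T *m S) *m (Vh^T *m w).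
  by rewrite /w -!mulmxA (mulmxA Vh^T S) mulKmx.
exact: specnorm_bound.
Qed.
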